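(* Let $\alpha\in\mathbb N^n$ and let $\mathcal A=\{u_1,\ldots,u_m\}$ be a set of monomials of $S=K[x_1,\ldots,x_n]$, minimal with respect to divisibility, with $K[\mathcal A]$ a homogeneous $K$-algebra. Then for all $i$ and $j$, $$\beta^{S_{\mathcal A}}_{ij}(I_{\mathcal A})\le\beta^{S_{\mathcal A^\alpha}}_{ij}(I_{\mathcal A^\alpha}).$$
   Context: $\mathbb N$ denotes the positive integers. For $\alpha=(k_1,\ldots,k_n)$, $S^\alpha=K[x_{ij}:1\le i\le n,1\le j\le k_i]$, $\pi:S^\alpha\to S$, $x_{ij}\mapsto x_i$, and $\mathcal A^\alpha$ is the set of monomials $w\in S^\alpha$ with $\pi(w)\in\mathcal A$. For a finite set $\mathcal B$ of monomials, $S_{\mathcal B}=K[y_u:u\in\mathcal B]$ is standard graded, $K[\mathcal B]$ is the $K$-algebra generated by $\mathcal B$, and $I_{\mathcal B}=\ker(S_{\mathcal B}\to K[\mathcal B],\ y_u\mapsto u)$. $\beta^{R}_{ij}(M)$ denotes the graded Betti numbers of a graded $R$-module $M$. *)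

From HB Require Import structures.
From mathcomp Require Import all_boot all_order all_algebra.
From mathcomp Require Import mpoly.
From Stdlib Require Import ClassicalEpsilon.
Set Implicit Arguments. Unset Strict Implicit. Unset Printing Implicit Defensive.
Import GRing.Theory.
Local Open Scope ring_scope.

Definition mdivides n (u v : 'X_{1..n}) : Prop := forall i, (u i <= v i)%N.

Definition div_minimal n (s : seq 'X_{1..n}) : Prop :=
  forall u v, u \in s -> v \in s -> mdivides u v -> u = v.

(* I_A for A = s = [u_1;...;u_m] : kernel of S_A = K[y_1..y_m] -> S, y_k |-> u_k *)
Definition toric_map (K : fieldType) n (s : seq 'X_{1..n})
  (p : {mpoly K[size s]}) : {mpoly K[n]} :=
  mmap (@mpolyC n K) (fun k : 'I_(size s) => 'X_[nth 0%MM s k]) p.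

Definition toric_ideal (K : fieldType) n (s : seq 'X_{1..n})
  (p : {mpoly K[size s]}) : Prop := toric_map p = 0.

Definition is_homog (K : fieldType) N (d : nat) (p : {mpoly K[N]}) : Prop :=
  forall m, m \in msupp p -> mdeg m = d.

Definition hcomp (K : fieldType) N (d : nat) (p : {mpoly K[N]}) : {mpoly K[N]} :=
  \sum_(m <- msupp p | mdeg m == d) p@_m *: 'X_[m].

Definition homog_ideal (K : fieldType) N (I : {mpoly K[N]} -> Prop) : Prop :=
  forall p d, I p -> I (hcomp d p).

(* K[A] is a homogeneous K-algebra: I_A is homogeneous in the standard grading *)
Definition homogeneous_toric (K : fieldType) n (s : seq 'X_{1..n}) : Prop :=
  homog_ideal (@toric_ideal K n s).

Section Dim.
Variables (K : fieldType) (V : lmodType K).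

Definition lin_indep (vs : seq V) : Prop :=
  forall c : nat -> K, \sum_(k < size vs) c k *: vs`_k = 0 ->
    forall k, (k < size vs)%N -> c k = 0.

Definition spans (P : V -> Prop) (vs : seq V) : Prop :=
  forall v, P v -> exists c : nat -> K, v = \sum_(k < size vs) c k *: vs`_k.

Definition has_dim (P : V -> Prop) (d : nat) : Prop :=
  exists vs : seq V, [/\ size vs = d, forall k, (k < size vs)%N -> P vs`_k,
                         lin_indep vs & spans P vs].

(* the dimension of P (meaningful when P is a finite-dimensional subspace) *)
Definition dimv (P : V -> Prop) : nat := epsilon (inhabits 0%N) (has_dim P).
End Dim.

(* Tor^{S}_i(M,K)_j computed from the Koszul resolution of K = S/(y_1..y_N),
   tensored with M (here M = I a homogeneous ideal of S = K[y_1..y_N]).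
   Chains: functions T |-> F T on subsets T of {1..N} (basis e_T of the
   exterior power), with F T in M of degree j - |T|. *)
Section Koszul.
Variables (K : fieldType) (N : nat).
Local Notation S := {mpoly K[N]}.
Local Notation chain := {ffun {set 'I_N} -> S}.

Definition kchain (I : S -> Prop) (i j : nat) (F : chain) : Prop :=
  forall T : {set 'I_N},
    if (#|T| == i) && (i <= j)%N then I (F T) /\ is_homog (j - i) (F T)
    else F T = 0.

(* Koszul differential: e_U (x) f |-> sum_{t in U} (-1)^{#{s in U, s<t}} e_{U\t} (x) y_t f *)
Definition kdiff (F : chain) : chain :=
  [ffun T : {set 'I_N} =>
     \sum_(t : 'I_N | t \notin T)
        (-1) ^+ #|[set s in T | (s < t)%N]| * 'X_t * F (t |: T)].

(* beta_{ij}(I) = dim_K Tor_i(I, K)_j *)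
Definition betti (I : S -> Prop) (i j : nat) : nat :=
  subn (dimv (fun F : chain => kchain I i j F /\ kdiff F = 0))
       (dimv (fun F : chain => exists G, kchain I i.+1 j G /\ F = kdiff G)).
End Koszul.

(* Variables of S^alpha are labelled by 'I_N'; own k = i means the k-th
   variable is some x_{i j}; pi : S^alpha -> S, x_{ij} |-> x_i on monomials. *)
Definition pi_mon n N' (own : 'I_N' -> 'I_n) (w : 'X_{1..N'}) : 'X_{1..n} :=
  [multinom (\sum_(k : 'I_N' | own k == i) w k)%N | i < n].

From HB Require Import structures.
From mathcomp Require Import all_boot all_order all_algebra.
From mathcomp Require Import mpoly.
From mathcomp Require Import zify ring.
From Stdlib Require Import ClassicalEpsilon Classical.
Set Implicit Arguments. Unset Strict Implicit. Unset Printing Implicit Defensive.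
Import GRing.Theory.
Local Open Scope ring_scope.

(* K[A] is an algebra retract of K[A^alpha]. Sending x_i to x_{i,1} maps A into
   A^alpha, and the substitution x_{i,1} -> x_i, x_{i,j} -> 0 (j > 1) maps A^alpha onto
   A and 0. On the side of the presentations this is a renaming y_u -> y_{lift u} of the
   variables of S_A, retracted by y_w -> y_{proj w} or 0; both maps carry the toric
   ideals into each other. With the signs needed to reorder exterior basis vectors they
   become maps of Koszul complexes whose composite is the identity. The cycles of
   degree (i, j) of I_A therefore embed into those of I_{A^alpha}, while the boundaries
   of I_{A^alpha} meeting the image come from boundaries of I_A; Grassmann's formula
   turns this into the inequality of the quotient dimensions. *)

(** * Dimension of subspaces given as predicates *)

Section FiniteDimension.
Variables (K : fieldType) (V : lmodType K).

Definition subspace (P : V -> Prop) :=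
  P 0 /\ forall a x y, P x -> P y -> P (a *: x + y).

Definition all_in (P : V -> Prop) (vs : seq V) := forall k, (k < size vs)%N -> P vs`_k.

Definition finite_dim (P : V -> Prop) :=
  exists (W : vectType K) (f : {linear V -> W}),
    forall x y, P x -> P y -> f x = f y -> x = y.

Definition psum (P Q : V -> Prop) v := exists2 x, P x & exists2 y, Q y & v = x + y.
Definition pcap (P Q : V -> Prop) v := P v /\ Q v.

Lemma subspaceZ P a x : subspace P -> P x -> P (a *: x).
Proof. by case=> P0 PL Px; rewrite -[_ *: _]addr0; apply: PL. Qed.

Lemma subspace_sum (I : Type) (r : seq I) (Q : pred I) (F : I -> V) P :
  subspace P -> (forall i, Q i -> P (F i)) -> P (\sum_(i <- r | Q i) F i).
Proof.
move=> [P0 PL] PF; apply: (big_ind P) => // x y Px Py.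
by rewrite -[x]scale1r; apply: PL.
Qed.

Lemma subspace_lincomb P vs (c : nat -> K) : subspace P -> all_in P vs ->
  P (\sum_(k < size vs) c k *: vs`_k).
Proof. by move=> sP Pvs; apply: subspace_sum => // k _; apply: subspaceZ => //; apply: Pvs. Qed.

Lemma subspace_psum P Q : subspace P -> subspace Q -> subspace (psum P Q).
Proof.
move=> [P0 PL] [Q0 QL]; split; first by exists 0 => //; exists 0; rewrite ?addr0.
move=> a _ _ [x1 Px1 [y1 Qy1 ->]] [x2 Px2 [y2 Qy2 ->]].
exists (a *: x1 + x2); first exact: PL.
by exists (a *: y1 + y2); [exact: QL | rewrite scalerDr addrACA].
Qed.

Lemma subspace_pcap P Q : subspace P -> subspace Q -> subspace (pcap P Q).
Proof. by move=> [P0 PL] [Q0 QL]; split=> // a x y [? ?] [? ?]; split; auto. Qed.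

Lemma psuml P Q v : subspace Q -> P v -> psum P Q v.
Proof. by move=> [Q0 _] Pv; exists v => //; exists 0; rewrite ?addr0. Qed.

Lemma psumr P Q v : subspace P -> Q v -> psum P Q v.
Proof. by move=> [P0 _] Qv; exists 0 => //; exists v; rewrite ?add0r. Qed.

(* Coefficients indexed by 'I_m, extended by 0 to the nat-indexed form of [lin_indep]. *)
Definition nat_coef m (k : 'I_m -> K) (i : nat) : K :=
  if insub i is Some j then k j else 0.

Lemma nat_coefE m (k : 'I_m -> K) (j : 'I_m) : nat_coef k j = k j.
Proof. by rewrite /nat_coef valK. Qed.

Lemma ex_maximal (Q : nat -> Prop) b : Q 0%N -> (forall k, Q k -> (k <= b)%N) ->
  exists k, Q k /\ ~ Q k.+1.
Proof.
move=> Q0 Qb; apply: NNPP => noMax.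
have Qall k : Q k by elim: k => // k IH; apply: NNPP => nQ; apply: noMax; exists k.
by have := Qb _ (Qall b.+1); rewrite ltnn.
Qed.

Section Coordinates.
Variables (W : vectType K) (coord : {linear V -> W}) (D : V -> Prop).
Hypothesis coord_inj : forall x y, D x -> D y -> coord x = coord y -> x = y.

Definition coords (vs : seq V) : (size vs).-tuple W := map_tuple coord (in_tuple vs).

Lemma coordsE vs i : (coords vs)`_i = coord vs`_i.
Proof.
have [lt|le] := ltnP i (size vs); first by rewrite (nth_map 0).
by rewrite !nth_default ?size_map // linear0.
Qed.

Lemma coord_lincomb vs (c : nat -> K) :
  coord (\sum_(k < size vs) c k *: vs`_k) = \sum_(k < size vs) c k *: (coords vs)`_k.
Proof. by rewrite linear_sum; apply: eq_bigr => k _; rewrite linearZ coordsE. Qed.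

Lemma lin_indep_coords vs : free (coords vs) -> lin_indep vs.
Proof.
move=> /freeP fr c c0 k lt_k; apply: (fr (fun i => c i) _ (Ordinal lt_k)).
by rewrite -coord_lincomb c0 linear0.
Qed.

Variable P : V -> Prop.
Hypotheses (sP : subspace P) (PD : forall v, P v -> D v).

Lemma free_coords vs : all_in P vs -> lin_indep vs -> free (coords vs).
Proof.
move=> Pvs li; apply/freeP => k k0 i; rewrite -(nat_coefE k).
apply: li (ltn_ord i); apply: coord_inj.
- by apply: PD; apply: subspace_lincomb.
- by apply: PD; case: sP.
- by rewrite coord_lincomb linear0 -[RHS]k0; apply: eq_bigr => j _; rewrite nat_coefE.
Qed.

Lemma lincomb_of_span vs v : all_in P vs -> P v -> coord v \in <<coords vs>>%VS ->
  exists c : nat -> K, v = \sum_(k < size vs) c k *: vs`_k.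
Proof.
move=> Pvs Pv /coord_span E; exists (nat_coef (fun i => vector.coord (coords vs) i (coord v))).
apply: coord_inj; [exact: PD | by apply: PD; apply: subspace_lincomb | ].
rewrite coord_lincomb {1}E; apply: eq_bigr => i _; by rewrite nat_coefE.
Qed.

Lemma ex_maximal_family : exists vs, [/\ all_in P vs, free (coords vs) &
  forall v, P v -> coord v \in <<coords vs>>%VS].
Proof.
pose Q k := exists vs, [/\ size vs = k, all_in P vs & free (coords vs)].
have Q0 : Q 0%N by exists [::]; split => //; apply: nil_free.
have Qb k : Q k -> (k <= \dim (fullv : {vspace W}))%N.
  case=> vs [<- _ /eqP fr]; rewrite -[X in (X <= _)%N](size_tuple (coords vs)) -fr.
  exact/dimvS/subvf.
have [k [[vs [sz Pvs fr]] nQ]] := ex_maximal Q0 Qb.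
exists vs; split => // v Pv; apply: NNPP => nin; apply: nQ; exists (v :: vs); split.
- by rewrite /= sz.
- by case=> [|i] /= ip; [exact: Pv | exact: Pvs].
- by rewrite /coords /= free_cons fr andbT; apply/negP.
Qed.

Lemma size_indep_le ws (X : seq W) : all_in P ws -> lin_indep ws ->
  (forall v, P v -> coord v \in <<X>>%VS) -> (size ws <= size X)%N.
Proof.
move=> Pws li PX; have /eqP fr := free_coords Pws li.
rewrite -[X in (X <= _)%N](size_tuple (coords ws)) -fr.
apply: leq_trans (dim_span X); apply/dimvS/span_subvP => _ /mapP [v /(nthP 0) [i ip <-] ->].
exact/PX/Pws.
Qed.

Lemma has_dim_maximal vs : all_in P vs -> free (coords vs) ->
  (forall v, P v -> coord v \in <<coords vs>>%VS) -> has_dim P (size vs).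
Proof.
move=> Pvs fr spanP; exists vs; split; [by [] | by [] | exact: lin_indep_coords | ].
by move=> v Pv; apply: lincomb_of_span Pvs Pv (spanP v Pv).
Qed.

Lemma dimv_maximal vs : all_in P vs -> free (coords vs) ->
  (forall v, P v -> coord v \in <<coords vs>>%VS) -> dimv P = size vs.
Proof.
move=> Pvs fr spanP.
have [bs [sz Pbs li spanbs]] : has_dim P (dimv P).
  by apply: epsilon_spec; exists (size vs); apply: has_dim_maximal.
have bs_in_span v : P v -> coord v \in <<coords bs>>%VS.
  move=> /spanbs [c ->]; rewrite coord_lincomb; apply: memv_suml => i _.
  by apply/memvZ/memv_span/mem_nth; rewrite size_tuple.
have := size_indep_le Pbs li spanP; have := size_indep_le Pvs (lin_indep_coords fr) bs_in_span.
by rewrite !size_tuple sz => le1 le2; apply/eqP; rewrite eqn_leq le1 le2.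
Qed.

Lemma span_coords_image vs w : all_in P vs -> w \in <<coords vs>>%VS ->
  exists2 v, P v & w = coord v.
Proof.
move=> Pvs /coord_span ->; pose c := nat_coef (fun i => vector.coord (coords vs) i w).
exists (\sum_(k < size vs) c k *: vs`_k); first exact: subspace_lincomb.
by rewrite coord_lincomb; apply: eq_bigr => i _; rewrite /c nat_coefE.
Qed.

Definition image_vspace (U : {vspace W}) := forall w, w \in U <-> exists2 v, P v & w = coord v.

Lemma ex_image_vspace : exists U, image_vspace U.
Proof.
have [vs [Pvs _ spanP]] := ex_maximal_family; exists <<coords vs>>%VS => w.
by split=> [|[v Pv ->]]; [exact: span_coords_image | exact: spanP].
Qed.

Lemma dimv_image_vspace U : image_vspace U -> dimv P = \dim U.
Proof.
move=> imU; have [vs [Pvs fr spanP]] := ex_maximal_family.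
suff -> : U = <<coords vs>>%VS by rewrite (dimv_maximal Pvs fr spanP) (eqP fr) size_tuple.
apply/vspaceP => w; apply/idP/idP => [/imU [v Pv ->]|/(span_coords_image Pvs)/imU //].
exact: spanP.
Qed.

End Coordinates.

Lemma has_dim_dimv P : subspace P -> finite_dim P -> has_dim P (dimv P).
Proof.
move=> sP [W [f inj]]; have [vs [Pvs fr spanP]] := ex_maximal_family f P.
have PP v : P v -> P v by [].
by rewrite (dimv_maximal inj sP PP Pvs fr spanP); apply: (has_dim_maximal inj sP PP).
Qed.

Lemma size_le_dimv P vs : subspace P -> finite_dim P -> all_in P vs -> lin_indep vs ->
  (size vs <= dimv P)%N.
Proof.
move=> sP [W [f inj]] Pvs li; have PP v : P v -> P v by [].
have [bs [Pbs fr spanP]] := ex_maximal_family f P.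
rewrite (dimv_maximal inj sP PP Pbs fr spanP) -(size_tuple (coords f bs)).
exact: (size_indep_le inj sP PP Pvs li spanP).
Qed.

Lemma dimv_sum_cap P Q : subspace P -> subspace Q -> finite_dim (psum P Q) ->
  (dimv (psum P Q) + dimv (pcap P Q) = dimv P + dimv Q)%N.
Proof.
move=> sP sQ [W [f inj]].
have PPQ v : P v -> psum P Q v by apply: psuml.
have QPQ v : Q v -> psum P Q v by apply: psumr.
have PQPQ v : pcap P Q v -> psum P Q v by case=> /PPQ.
have [UP imP] := ex_image_vspace f sP; have [UQ imQ] := ex_image_vspace f sQ.
rewrite (dimv_image_vspace inj sP PPQ imP) (dimv_image_vspace inj sQ QPQ imQ) -dimv_sum_cap.
congr (_ + _)%N.
- apply: (dimv_image_vspace inj (subspace_psum sP sQ) (fun v Pv => Pv)) => w; split.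
  + move=> /memv_addP [_ /imP [x Px ->] [_ /imQ [y Qy ->] ->]].
    by exists (x + y); [exists x => //; exists y | rewrite linearD].
  + case=> _ [x Px [y Qy ->]] ->; rewrite linearD.
    by apply: memv_add; [apply/imP; exists x | apply/imQ; exists y].
- apply: (dimv_image_vspace inj (subspace_pcap sP sQ) PQPQ) => w; rewrite memv_cap; split.
  + case/andP => /imP [x Px ->] /imQ [y Qy E]; exists x => //; split => //.
    by rewrite (inj x y (PPQ _ Px) (QPQ _ Qy) E).
  + by case=> v [Pv Qv] ->; apply/andP; split; [apply/imP | apply/imQ]; exists v.
Qed.

End FiniteDimension.

Section LinearMaps.
Variable K : fieldType.
Implicit Types U V : lmodType K.

Lemma finite_dim_sub V (P Q : V -> Prop) :
  finite_dim Q -> (forall v, P v -> Q v) -> finite_dim P.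
Proof. by case=> W [f inj] PQ; exists W, f => x y /PQ Qx /PQ Qy; apply: inj. Qed.

Lemma dimv_le_inj U V (P : U -> Prop) (Q : V -> Prop) (f : {linear U -> V}) :
  subspace P -> subspace Q -> finite_dim P -> finite_dim Q ->
  (forall x, P x -> Q (f x)) -> (forall x y, P x -> P y -> f x = f y -> x = y) ->
  (dimv P <= dimv Q)%N.
Proof.
move=> sP sQ fdP fdQ PQ inj; have [bs [sz Pbs li _]] := has_dim_dimv sP fdP.
rewrite -sz -(size_map f); apply: size_le_dimv => //.
  by move=> k; rewrite size_map => lt_k; rewrite (nth_map 0) //; apply/PQ/Pbs.
move=> c c0 k; rewrite size_map => lt_k; apply: (li c _ k lt_k); apply: inj.
- exact: (subspace_lincomb c sP Pbs).
- by case: sP.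
- rewrite linear0 -[RHS]c0 linear_sum size_map; apply: eq_bigr => i _.
  by rewrite linearZ (nth_map 0).
Qed.

Lemma dimv_le_sub V (P Q : V -> Prop) : subspace P -> subspace Q -> finite_dim Q ->
  (forall v, P v -> Q v) -> (dimv P <= dimv Q)%N.
Proof.
move=> sP sQ fdQ PQ; have [bs [<- Pbs li _]] := has_dim_dimv sP (finite_dim_sub fdQ PQ).
by apply: size_le_dimv => // k /Pbs /PQ.
Qed.

Lemma dimv_subquotient_retract U V (Z B : U -> Prop) (Z' B' : V -> Prop)
    (sig : {linear U -> V}) (rho : {linear V -> U}) :
  subspace Z -> subspace B -> subspace Z' -> subspace B' -> finite_dim Z -> finite_dim Z' ->
  (forall x, B x -> Z x) -> (forall y, B' y -> Z' y) ->
  (forall x, Z x -> Z' (sig x)) -> (forall y, B' y -> B (rho y)) ->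
  (forall x, Z x -> rho (sig x) = x) ->
  (dimv Z - dimv B <= dimv Z' - dimv B')%N.
Proof.
move=> sZ sB sZ' sB' fdZ fdZ' BZ BZ' sigZ rhoB rhoK.
pose Zs y := exists2 x, Z x & y = sig x.
have sZs : subspace Zs.
  split; first by exists 0; [case: sZ | rewrite linear0].
  move=> a _ _ [x Zx ->] [y Zy ->]; exists (a *: x + y); last by rewrite linearP.
  by case: sZ => _; apply.
have ZsZ' y : Zs y -> Z' y by case=> x Zx ->; apply: sigZ.
have sumZ' y : psum Zs B' y -> Z' y.
  case=> _ [x Zx ->] [z Bz ->]; rewrite -[sig x]scale1r; case: sZ' => _; apply.
  - exact: sigZ.
  - exact: BZ'.
have fd_sum := finite_dim_sub fdZ' sumZ'.
have grassmann := dimv_sum_cap sZs sB' fd_sum.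
have le_sum := dimv_le_sub (subspace_psum sZs sB') sZ' fdZ' sumZ'.
have le_Zs : (dimv Z <= dimv Zs)%N.
  apply: (dimv_le_inj (f := sig)) => //.
  - by apply: finite_dim_sub fdZ' ZsZ'.
  - by move=> x Zx; exists x.
  - by move=> x y Zx Zy /(congr1 rho); rewrite !rhoK.
have le_cap : (dimv (pcap Zs B') <= dimv B)%N.
  apply: (dimv_le_inj (f := rho)) => //.
  - exact: subspace_pcap.
  - exact: finite_dim_sub fdZ' (fun y (Zsy : pcap Zs B' y) => ZsZ' y (proj1 Zsy)).
  - by apply: finite_dim_sub fdZ BZ.
  - by move=> y [_ /rhoB].
  - by move=> _ _ [[x Zx ->] _] [[y Zy ->] _]; rewrite !rhoK // => ->.
lia.
Qed.

End LinearMaps.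

(** * The Koszul complex of an ideal *)

Section Homogeneity.
Variables (K : fieldType) (N : nat).

Lemma is_homogE d (p : {mpoly K[N]}) : is_homog d p <-> p \is d.-homog.
Proof. by split => [H|/dhomogP H m mp]; [apply/dhomogP => m mp; apply: H | apply: H]. Qed.

Lemma subspace_homog d : subspace (@is_homog K N d).
Proof.
split=> [|a p q /is_homogE hp /is_homogE hq]; apply/is_homogE; first exact: rpred0.
by rewrite rpredD ?rpredZ.
Qed.

Lemma msize_homog d (p : {mpoly K[N]}) : is_homog d p -> (msize p <= d.+1)%N.
Proof. by move=> hp; rewrite msizeE; apply/bigmax_leqP_seq => m /hp ->. Qed.

Lemma homog_sign_var_mul d e t (p : {mpoly K[N]}) :
  is_homog d p -> is_homog d.+1 ((-1) ^+ e * 'X_t * p).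
Proof.
move=> /is_homogE hp; apply/is_homogE; rewrite -add1n -[1%N]add0n.
apply: dhomogM => //; apply: dhomogM; last by rewrite dhomogX; apply/eqP; apply: mdeg1.
by rewrite -signr_odd; case: (odd e); rewrite ?rpredN dhomog1.
Qed.

End Homogeneity.

Lemma card_set_sum (T : finType) (A : {set T}) (P : pred T) :
  #|[set s in A | P s]| = (\sum_(s in A) P s)%N.
Proof.
rewrite -sum1_card (eq_bigl (fun s => (s \in A) && P s)) => [|s]; last by rewrite inE.
by rewrite big_mkcondr; apply: eq_bigr => s _; case: (P s).
Qed.

Lemma sign_mul (R : ringType) (e : nat) (x : R) : (-1) ^+ e * x = if odd e then - x else x.
Proof. by rewrite -signr_odd mulr_sign. Qed.

Local Notation chain K N := {ffun {set 'I_N} -> {mpoly K[N]}}.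

Section KoszulComplex.
Variables (K : fieldType) (N : nat).
Local Notation chain := (chain K N).

Lemma kdiff_is_linear : linear (@kdiff K N).
Proof.
move=> a F G; apply/ffunP => T; rewrite !ffunE scaler_sumr -big_split.
by apply: eq_bigr => t _; rewrite !ffunE mulrDr scalerAr.
Qed.

HB.instance Definition _ := GRing.isLinear.Build K chain chain *:%R (@kdiff K N)
  kdiff_is_linear.

Lemma card_lt_setU1 (T : {set 'I_N}) (t u : 'I_N) : t \notin T ->
  #|[set s in t |: T | (s < u)%N]| = ((t < u)%N + #|[set s in T | (s < u)%N]|)%N.
Proof. by move=> tT; rewrite !card_set_sum big_setU1. Qed.

Lemma sum_pairs_cancel (R : zmodType) (T : {set 'I_N}) (A : 'I_N -> 'I_N -> R) :
  (forall t u, t \notin T -> u \notin T -> (t < u)%N -> A t u + A u t = 0) ->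
  \sum_(t | t \notin T) \sum_(u | u \notin t |: T) A t u = 0.
Proof.
move=> A_anti.
have split_u t : \sum_(u | u \notin t |: T) A t u =
   \sum_(u | (u \notin T) && (u < t)%N) A t u + \sum_(u | (u \notin T) && (t < u)%N) A t u.
  rewrite (bigID (fun u : 'I_N => (u < t)%N)) /=; congr (_ + _); apply: eq_bigl => u;
  by rewrite in_setU1 negb_or -val_eqE /=; case: (ltngtP u t); rewrite ?andbT ?andbF.
under eq_bigr => t _ do rewrite split_u.
rewrite big_split /= (exchange_big_dep (fun u => u \notin T)) /=; last by move=> t u _ /andP [].
rewrite -big_split /=; apply: big1 => t tT.
rewrite [X in X + _](eq_bigl (fun u => (u \notin T) && (t < u)%N)) => [|u]; last by rewrite tT.
by rewrite -big_split /=; apply: big1 => u /andP [uT tu]; rewrite addrC A_anti.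
Qed.

(* The two ways of removing t and u from T|{t,u} carry opposite signs. *)
Lemma kdiffK (F : chain) : kdiff (kdiff F) = 0.
Proof.
apply/ffunP => T; rewrite !ffunE.
under eq_bigr => t tT do rewrite ffunE mulr_sumr.
apply: sum_pairs_cancel => t u tT uT tu.
rewrite !card_lt_setU1 // tu ltnNge (ltnW tu) /= add0n add1n exprS setUCA.
set a := (-1) ^+ _; set b := (-1) ^+ _.
ring.
Qed.

Definition is_ideal (I : {mpoly K[N]} -> Prop) :=
  subspace I /\ forall t p, I p -> I ('X_t * p).

Lemma ideal_sign_var_mul I e t (p : {mpoly K[N]}) :
  is_ideal I -> I p -> I ((-1) ^+ e * 'X_t * p).
Proof.
move=> [sI IX] Ip; rewrite -mulrA sign_mul; case: ifP => _; last exact: IX.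
by rewrite -scaleN1r; apply: subspaceZ => //; apply: IX.
Qed.

Lemma subspace_kchain (I : {mpoly K[N]} -> Prop) i j : subspace I -> subspace (kchain I i j).
Proof.
move=> sI; have [h0 hL] := subspace_homog K N (j - i); have [I0 IL] := sI.
split=> [T|a F G kF kG T]; rewrite !ffunE; first by case: ifP.
by move: (kF T) (kG T); case: ifP => [_ [? ?] [? ?]|_ -> ->]; [split; auto | rewrite scaler0 addr0].
Qed.

Lemma kdiff_kchain I i j G : is_ideal I -> kchain I i.+1 j G -> kchain I i j (kdiff G).
Proof.
move=> idI kG T; rewrite ffunE; have [sI _] := idI.
have kGU1 t : t \notin T -> if (#|T| == i) && (i < j)%N
    then I (G (t |: T)) /\ is_homog (j - i.+1) (G (t |: T)) else G (t |: T) = 0.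
  by move=> tT; have := kG (t |: T); rewrite cardsU1 tT add1n eqSS.
have G0 t : t \notin T -> ~~ ((#|T| == i) && (i < j)%N) -> G (t |: T) = 0.
  by move=> /kGU1; case: ifP.
case: ifP => [/andP [/eqP cT le_ij]|not_deg]; last first.
  rewrite big1 // => t tT; rewrite G0 ?mulr0 //.
  by apply: contraFN not_deg => /andP [-> /ltnW ->].
have [lt_ij|ge_ij] := ltnP i j; last first.
  rewrite big1 => [|t tT]; last by rewrite G0 ?mulr0 // cT eqxx ltnNge ge_ij.
  by split; [case: sI | case: (subspace_homog K N (j - i))].
have kGT t : t \notin T -> I (G (t |: T)) /\ is_homog (j - i.+1) (G (t |: T)).
  by move=> /kGU1; rewrite cT eqxx lt_ij.
split; first by apply: subspace_sum => // t /kGT [IG _]; apply: ideal_sign_var_mul.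
rewrite -(subnSK lt_ij); apply: subspace_sum => [|t /kGT [_ hG]]; first exact: subspace_homog.
exact: homog_sign_var_mul.
Qed.

Definition kcycle I i j (F : chain) := kchain I i j F /\ kdiff F = 0.
Definition kboundary I i j (F : chain) := exists G, kchain I i.+1 j G /\ F = kdiff G.

Lemma subspace_kcycle I i j : subspace I -> subspace (kcycle I i j).
Proof.
move=> /(subspace_kchain i j) [k0 kL]; split=> [|a F G [kF dF] [kG dG]].
  by split; rewrite ?linear0.
by split; [apply: kL | rewrite kdiff_is_linear dF dG scaler0 addr0].
Qed.

Lemma subspace_kboundary I i j : subspace I -> subspace (kboundary I i j).
Proof.
move=> /(subspace_kchain i.+1 j) [k0 kL]; split=> [|a _ _ [F [kF ->]] [G [kG ->]]].
  by exists 0; rewrite linear0.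
by exists (a *: F + G); rewrite kdiff_is_linear; split => //; apply: kL.
Qed.

Lemma kboundary_kcycle I i j F : is_ideal I -> kboundary I i j F -> kcycle I i j F.
Proof. by move=> idI [G [kG ->]]; split; [apply: kdiff_kchain | apply: kdiffK]. Qed.

Definition bounded_chain b (F : chain) := forall T, (msize (F T) <= b)%N.

Definition chain_coefs b (F : chain) : {ffun {set 'I_N} * 'X_{1..N < b} -> K^o} :=
  [ffun p => (F p.1)@_(bmnm p.2)].

Lemma chain_coefs_is_linear b : linear (chain_coefs b).
Proof. by move=> a F G; apply/ffunP => p; rewrite !ffunE mcoeffD mcoeffZ. Qed.

HB.instance Definition _ b := GRing.isLinear.Build K chain _ *:%R (chain_coefs b)
  (@chain_coefs_is_linear b).

Lemma finite_dim_bounded b (P : chain -> Prop) :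
  (forall F, P F -> bounded_chain b F) -> finite_dim P.
Proof.
move=> Pb; exists _, (chain_coefs b) => F G /Pb bF /Pb bG E; apply/ffunP => T.
rewrite (mpolywE (bF T)) (mpolywE (bG T)); apply: eq_bigr => m _.
by have := congr1 (fun w : {ffun _ -> K^o} => w (T, m)) E; rewrite !ffunE /= => ->.
Qed.

Lemma kchain_bounded I i j F : kchain I i j F -> bounded_chain (j - i).+1 F.
Proof.
move=> kF T; have := kF T; case: ifP => _; last by move=> ->; rewrite msize0.
by case=> _ /msize_homog.
Qed.

Lemma finite_dim_kcycle I i j : finite_dim (kcycle I i j).
Proof. by apply: (@finite_dim_bounded (j - i).+1) => F [/kchain_bounded]. Qed.

End KoszulComplex.

Section ChainRetract.
Variable K : fieldType.

Theorem betti_le_chain_retract m M (I : {mpoly K[m]} -> Prop) (I' : {mpoly K[M]} -> Prop)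
    (sig : {linear chain K m -> chain K M}) (rho : {linear chain K M -> chain K m}) i j :
  is_ideal I -> is_ideal I' -> (forall F, rho (sig F) = F) ->
  (forall F, kdiff (sig F) = sig (kdiff F)) -> (forall G, kdiff (rho G) = rho (kdiff G)) ->
  (forall k F, kchain I k j F -> kchain I' k j (sig F)) ->
  (forall k G, kchain I' k j G -> kchain I k j (rho G)) ->
  (betti I i j <= betti I' i j)%N.
Proof.
move=> idI idI' rhoK sig_kdiff rho_kdiff sig_kchain rho_kchain.
have [sI _] := idI; have [sI' _] := idI'.
apply: (dimv_subquotient_retract (sig := sig) (rho := rho)).
- exact: subspace_kcycle.
- exact: subspace_kboundary.
- exact: subspace_kcycle.
- exact: subspace_kboundary.
- exact: finite_dim_kcycle.
- exact: finite_dim_kcycle.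
- by move=> F; apply: kboundary_kcycle.
- by move=> G; apply: kboundary_kcycle.
- by move=> F [kF dF]; split; [apply: sig_kchain | rewrite sig_kdiff dF linear0].
- by move=> _ [G [kG ->]]; exists (rho G); rewrite rho_kdiff; split => //; apply: rho_kchain.
- by move=> F _; apply: rhoK.
Qed.

End ChainRetract.

(** * Renaming and retracting variables *)

Section PolynomialMaps.
Variable K : fieldType.

Lemma mpoly_rmorph_eq m M (phi psi : {rmorphism {mpoly K[m]} -> {mpoly K[M]}}) :
  (forall c, phi c%:MP = psi c%:MP) -> (forall i, phi 'X_i = psi 'X_i) -> phi =1 psi.
Proof.
move=> eqC eqX p; rewrite [p]mpolyE !rmorph_sum; apply: eq_bigr => u _.
rewrite -mul_mpolyC !rmorphM eqC mpolyXE_id !rmorph_prod; congr (_ * _).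
by apply: eq_bigr => i _; rewrite !rmorphXn eqX.
Qed.

Lemma mmap_homog m M (h : 'I_m -> {mpoly K[M]}) d p :
  (forall i, h i = 0 \/ exists j, h i = 'X_j) -> is_homog d p ->
  is_homog d (mmap (@mpolyC M K) h p).
Proof.
move=> hX /is_homogE /dhomogP hp; apply/is_homogE.
rewrite /mmap big_seq; apply: rpred_sum => u up; rewrite mul_mpolyC; apply: rpredZ.
have <- : (\sum_i u i)%N = d by rewrite -mdegE; exact: hp.
rewrite /mmap1; elim/big_rec2: _ => [|i d0 q _ hq]; first exact: dhomog1.
apply: dhomogM => //; case: (hX i) => [->|[j ->]].
  by case: (u i) => [|k]; rewrite ?expr0 ?dhomog1 // expr0n rpred0.
by rewrite -[X in X.-homog]mul1n; apply: dhomogMn; rewrite dhomogX; apply/eqP; apply: mdeg1.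
Qed.

End PolynomialMaps.

Section VariableRetract.
Variables (K : fieldType) (m M : nat) (f : 'I_m -> 'I_M) (g : 'I_M -> 'I_m)
  (keep : pred 'I_M).
Hypotheses (fK : cancel f g) (gK : forall w, keep w -> f (g w) = w)
  (keep_f : forall k, keep (f k)).

Definition pull_var (w : 'I_M) : {mpoly K[m]} := if keep w then 'X_(g w) else 0.

Local Notation push := (mmap (@mpolyC M K) (fun k => 'X_(f k))).
Local Notation pull := (mmap (@mpolyC m K) pull_var).

Lemma f_inj : injective f.
Proof. exact: can_inj fK. Qed.

Lemma pull_push p : pull (push p) = p.
Proof.
apply: (@mpoly_rmorph_eq _ _ _ (pull \o push)%FUN idfun) => [c|i] /=; first by rewrite !mmapC.
by rewrite !(mmapX, mmap1U) /pull_var keep_f fK.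
Qed.

Lemma push_homog d p : is_homog d p -> is_homog d (push p).
Proof. by apply: mmap_homog => i; right; exists (f i). Qed.

Lemma pull_homog d p : is_homog d p -> is_homog d (pull p).
Proof.
apply: mmap_homog => w; rewrite /pull_var; case: (keep w); last by left.
by right; exists (g w).
Qed.

(* [(-1) ^+ inversions T] is the sign of the permutation sorting [f @: T]: it relates
   the exterior basis vectors [e_T] and [e_(f @: T)]. *)
Definition inversions (T : {set 'I_m}) : nat :=
  (\sum_(s in T) \sum_(s' in T) ((s < s')%N && (f s' < f s)%N))%N.
Definition inv_sign (T : {set 'I_m}) : K := (-1) ^+ inversions T.

Lemma odd_inversions_setU1 (T : {set 'I_m}) (t : 'I_m) : t \notin T ->
  odd (inversions (t |: T) + #|[set s in T | (s < t)%N]|) =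
  odd (inversions T + #|[set s' in f @: T | (s' < f t)%N]|).
Proof.
move=> tT.
have inv_U1 : inversions (t |: T) = (inversions T +
    \sum_(s in T) (((t < s)%N && (f s < f t)%N) + ((s < t)%N && (f t < f s)%N)))%N.
  rewrite /inversions big_setU1 //= big_setU1 //= ltnn /= add0n.
  under [X in (_ + X)%N = _]eq_bigr => s sT do rewrite big_setU1 //=.
  by rewrite big_split /= [RHS]addnC addnA -big_split.
(* Each s in T contributes [s < t] + [t < s, f s < f t] + [s < t, f t < f s] on the
   left and [f s < f t] on the right; these agree modulo 2. *)
have term s : s \in T -> (((t < s)%N && (f s < f t)%N) + ((s < t)%N && (f t < f s)%N)
    + (s < t)%N = (f s < f t)%N + 2 * ((s < t)%N && (f t < f s)%N))%N.
  move=> sT; have ne_st : s != t by apply: contraNneq tT => <-.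
  have ne_f : f s != f t by apply: contra ne_st => /eqP /f_inj ->.
  move: ne_st ne_f; rewrite -!val_eqE /=.
  by case: (ltngtP s t) => // h1; case: (ltngtP (f s) (f t)).
rewrite inv_U1 !card_set_sum big_imset /=; last by move=> x y _ _; apply: f_inj.
rewrite -addnA -big_split /= (eq_bigr _ term) big_split /= -big_distrr /=.
by rewrite addnA oddD [odd (2 * _)]oddM addbF.
Qed.

Definition push_chain (F : chain K m) : chain K M :=
  [ffun T' : {set 'I_M} => if T' \subset [set w | keep w]
     then inv_sign (g @: T') *: push (F (g @: T')) else 0].

Definition pull_chain (G : chain K M) : chain K m :=
  [ffun T : {set 'I_m} => inv_sign T *: pull (G (f @: T))].

Lemma push_chain_is_linear : linear push_chain.
Proof.
move=> a F G; apply/ffunP => T'; rewrite !ffunE; case: ifP => _; last by rewrite scaler0 addr0.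
by rewrite raddfD /= mmapZ mul_mpolyC scalerDr !scalerA mulrC.
Qed.

HB.instance Definition _ := GRing.isLinear.Build K (chain K m) (chain K M) *:%R push_chain
  push_chain_is_linear.

Lemma pull_chain_is_linear : linear pull_chain.
Proof.
move=> a F G; apply/ffunP => T; rewrite !ffunE.
by rewrite raddfD /= mmapZ mul_mpolyC scalerDr !scalerA mulrC.
Qed.

HB.instance Definition _ := GRing.isLinear.Build K (chain K M) (chain K m) *:%R pull_chain
  pull_chain_is_linear.

Lemma imset_g_f (T : {set 'I_m}) : g @: (f @: T) = T.
Proof. by rewrite -imset_comp (eq_imset _ fK) imset_id. Qed.

Lemma imset_f_g (T' : {set 'I_M}) : T' \subset [set w | keep w] -> f @: (g @: T') = T'.
Proof.
move=> /subsetP T'keep; rewrite -imset_comp -[RHS]imset_id; apply: eq_in_imset => w wT.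
by apply: gK; have := T'keep w wT; rewrite inE.
Qed.

Lemma imset_f_keep (T : {set 'I_m}) : f @: T \subset [set w | keep w].
Proof. by apply/subsetP => _ /imsetP [x _ ->]; rewrite inE keep_f. Qed.

Lemma pull_push_chain F : pull_chain (push_chain F) = F.
Proof.
apply/ffunP => T; rewrite !ffunE imset_f_keep imset_g_f mmapZ mul_mpolyC pull_push.
by rewrite scalerA /inv_sign -expr2 sqrr_sign scale1r.
Qed.

Lemma sum_keep_reindex (R : nmodType) (T : {set 'I_m}) (H : 'I_M -> R) :
  \sum_(t' | (t' \notin f @: T) && keep t') H t' = \sum_(t | t \notin T) H (f t).
Proof.
rewrite (reindex_onto f g) => [|w /andP [_]]; last exact: gK.
by apply: eq_bigl => t; rewrite (mem_imset _ _ f_inj) keep_f fK eqxx !andbT.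
Qed.

Lemma push_sign_var_mul e t p : push ((-1) ^+ e * 'X_t * p) = (-1) ^+ e * 'X_(f t) * push p.
Proof. by rewrite !rmorphM /= rmorph_sign !(mmapX, mmap1U). Qed.

Lemma pull_sign_var_mul e t p : pull ((-1) ^+ e * 'X_t * p) = (-1) ^+ e * pull_var t * pull p.
Proof. by rewrite !rmorphM /= rmorph_sign !(mmapX, mmap1U). Qed.

Lemma push_chain_kdiff F : kdiff (push_chain F) = push_chain (kdiff F).
Proof.
apply/ffunP => T'; rewrite !ffunE; case: ifP => T'keep; last first.
  apply: big1 => t' _; rewrite ffunE ifF ?mulr0 //; apply: contraFF T'keep.
  exact/subset_trans/subsetUr.
rewrite -(imset_f_g T'keep); move: (g @: T') => T {T'keep T'}; rewrite imset_g_f.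
rewrite (bigID keep) /= [X in _ + X]big1 ?addr0 => [|t' /andP [_ not_kt]]; last first.
  rewrite ffunE ifF ?mulr0 //; apply/negbTE/negP => /subsetP /(_ t' (setU11 _ _)).
  by rewrite inE (negbTE not_kt).
rewrite sum_keep_reindex [X in inv_sign T *: X]raddf_sum scaler_sumr; apply: eq_bigr => t tT.
rewrite ffunE -imsetU1 imset_f_keep imset_g_f /= push_sign_var_mul -!mul_mpolyC.
set a := #|[set s in T | _]|; set b := #|[set s' in _ | _]|.
have sign_eq : (-1) ^+ b * inv_sign (t |: T) = inv_sign T * (-1) ^+ a :> K.
  rewrite /inv_sign -!exprD -signr_odd -[RHS]signr_odd; congr (_ ^+ _).
  move: (odd_inversions_setU1 tT); rewrite -/a -/b !oddD.
  by case: (odd a) (odd b) (odd (inversions T)) (odd (inversions (t |: T))) => [] [] [] [].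
rewrite -[(-1) ^+ a](rmorph_sign (@mpolyC M K)) -[(-1) ^+ b](rmorph_sign (@mpolyC M K)).
transitivity (((-1) ^+ b * inv_sign (t |: T))%:MP * ('X_(f t) * push (F (t |: T)))).
  by rewrite rmorphM /=; ring.
by rewrite sign_eq rmorphM /=; ring.
Qed.

Lemma pull_chain_kdiff G : kdiff (pull_chain G) = pull_chain (kdiff G).
Proof.
apply/ffunP => T; rewrite !ffunE [X in inv_sign T *: X]raddf_sum scaler_sumr.
rewrite (bigID keep) /= [X in _ = _ + X]big1 ?addr0 => [|t' /andP [_ not_kt]]; last first.
  by rewrite pull_sign_var_mul /pull_var (negbTE not_kt) mulr0 mul0r scaler0.
rewrite sum_keep_reindex; apply: eq_bigr => t tT.
rewrite ffunE pull_sign_var_mul /pull_var keep_f fK imsetU1 -!mul_mpolyC.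
set a := #|[set s in T | _]|; set b := #|[set s' in _ | _]|.
have sign_eq : (-1) ^+ a * inv_sign (t |: T) = inv_sign T * (-1) ^+ b :> K.
  rewrite /inv_sign -!exprD -signr_odd -[RHS]signr_odd addnC.
  by rewrite (odd_inversions_setU1 tT).
rewrite -[(-1) ^+ a](rmorph_sign (@mpolyC m K)) -[(-1) ^+ b](rmorph_sign (@mpolyC m K)).
transitivity (((-1) ^+ a * inv_sign (t |: T))%:MP * ('X_t * pull (G (f t |: f @: T)))).
  by rewrite rmorphM /=; ring.
by rewrite sign_eq rmorphM /=; ring.
Qed.

Lemma push_chain_kchain (I : {mpoly K[m]} -> Prop) (I' : {mpoly K[M]} -> Prop) i j F :
  subspace I' -> (forall p, I p -> I' (push p)) -> kchain I i j F -> kchain I' i j (push_chain F).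
Proof.
move=> sI' pushI kF T'; rewrite ffunE; have [I'0 _] := sI'.
case: (boolP (T' \subset [set w | keep w])) => T'keep; last first.
  by case: ifP => _ //; split => //; case: (subspace_homog K M (j - i)).
have card_gT' : #|g @: T'| = #|T'|.
  by rewrite -{2}(imset_f_g T'keep) (card_imset _ f_inj).
have := kF (g @: T'); rewrite card_gT'; case: ifP => _; last first.
  by move=> ->; rewrite raddf0 scaler0.
case=> Ip hp; split; first exact: subspaceZ sI' (pushI _ Ip).
exact: subspaceZ (subspace_homog K M _) (push_homog hp).
Qed.

Lemma pull_chain_kchain (I : {mpoly K[m]} -> Prop) (I' : {mpoly K[M]} -> Prop) i j G :
  subspace I -> (forall p, I' p -> I (pull p)) -> kchain I' i j G -> kchain I i j (pull_chain G).
Proof.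
move=> sI pullI kG T; rewrite ffunE.
have := kG (f @: T); rewrite (card_imset _ f_inj); case: ifP => _; last first.
  by move=> ->; rewrite raddf0 scaler0.
case=> Ip hp; split; first exact: subspaceZ sI (pullI _ Ip).
exact: subspaceZ (subspace_homog K m _) (pull_homog hp).
Qed.

Theorem betti_le_variable_retract (I : {mpoly K[m]} -> Prop) (I' : {mpoly K[M]} -> Prop) i j :
  is_ideal I -> is_ideal I' -> (forall p, I p -> I' (push p)) -> (forall p, I' p -> I (pull p)) ->
  (betti I i j <= betti I' i j)%N.
Proof.
move=> idI idI' pushI pullI.
apply: (betti_le_chain_retract (sig := push_chain) (rho := pull_chain)) => //.
- exact: pull_push_chain.
- exact: push_chain_kdiff.
- exact: pull_chain_kdiff.
- by move=> k F; apply: push_chain_kchain => //; case: idI'.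
- by move=> k G; apply: pull_chain_kchain => //; case: idI.
Qed.

End VariableRetract.

(** * Toric ideals of A and A^alpha *)

Lemma toric_ideal_is_ideal (K : fieldType) n (s : seq 'X_{1..n}) :
  is_ideal (@toric_ideal K n s).
Proof.
rewrite /toric_ideal /toric_map; split; first split.
- by rewrite raddf0.
- by move=> a p q hp hq; rewrite raddfD /= mmapZ hp hq mulr0 addr0.
- by move=> t p hp; rewrite rmorphM /= hp mulr0.
Qed.

Section Polarization.
Variables (K : fieldType) (n : nat) (s : seq 'X_{1..n}) (N' : nat) (own : 'I_N' -> 'I_n)
  (salpha : seq 'X_{1..N'}).
Hypotheses (s_uniq : uniq s) (salpha_uniq : uniq salpha)
  (own_onto : forall x, exists k, own k == x)
  (salpha_def : forall w, w \in salpha <-> pi_mon own w \in s).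

(* The variable x_{x,1} of S^alpha. *)
Definition rep x := xchoose (own_onto x).

Lemma own_rep x : own (rep x) = x.
Proof. exact/eqP/(xchooseP (own_onto x)). Qed.

Definition lift_mon (u : 'X_{1..n}) : 'X_{1..N'} :=
  [multinom (if k == rep (own k) then u (own k) else 0%N) | k < N'].

Definition on_reps (w : 'X_{1..N'}) : bool :=
  [forall k, (k != rep (own k)) ==> (w k == 0%N)].

Lemma sum_fiber (F : 'I_N' -> nat) x :
  (forall k, own k = x -> k != rep x -> F k = 0%N) ->
  (\sum_(k | own k == x) F k)%N = F (rep x).
Proof.
move=> F0; rewrite (bigD1 (rep x)) ?own_rep //= big1 ?addn0 // => k /andP [/eqP ok kr].
exact: F0.
Qed.

Lemma pi_mon_lift u : pi_mon own (lift_mon u) = u.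
Proof.
apply/mnmP => x; rewrite mnmE (@sum_fiber (lift_mon u)) => [|k ok kr]; rewrite mnmE.
  by rewrite own_rep eqxx.
by rewrite ok (negbTE kr).
Qed.

Lemma on_reps_lift u : on_reps (lift_mon u).
Proof. by apply/forallP => k; apply/implyP => kr; rewrite mnmE (negbTE kr). Qed.

Lemma lift_pi_mon w : on_reps w -> lift_mon (pi_mon own w) = w.
Proof.
move=> /forallP w_reps; have w0 k : k != rep (own k) -> w k = 0%N.
  by move=> kr; apply/eqP; move/implyP: (w_reps k); apply.
apply/mnmP => k; rewrite mnmE; case: ifP => [/eqP kr|/negbT /w0 //].
by rewrite mnmE (@sum_fiber w) -?kr // => k' ok' nk'; apply: w0; rewrite ok' -kr.
Qed.

Lemma mpolyX_lift_mon u : 'X_[lift_mon u] = \prod_(x < n) 'X_(rep x) ^+ u x :> {mpoly K[N']}.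
Proof.
rewrite mpolyXE_id (partition_big own xpredT) //=; apply: eq_bigr => x _.
rewrite (bigD1 (rep x)) ?own_rep //= big1 ?mulr1; first by rewrite mnmE own_rep eqxx.
by move=> k /andP [/eqP ok kr]; rewrite mnmE ok (negbTE kr) expr0.
Qed.

Definition collapse_var (k : 'I_N') : {mpoly K[n]} :=
  if k == rep (own k) then 'X_(own k) else 0.

Lemma mmap1_collapse (w : 'X_{1..N'}) :
  mmap1 collapse_var w = if on_reps w then 'X_[pi_mon own w] else 0.
Proof.
rewrite /mmap1 (partition_big own xpredT) //=; case: ifP => [/forallP w_reps|].
  rewrite mpolyXE_id; apply: eq_bigr => x _.
  have w0 k : own k = x -> k != rep x -> w k = 0%N.
    by move=> <- kr; apply/eqP; move/implyP: (w_reps k); apply.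
  rewrite (bigD1 (rep x)) ?own_rep //= big1 ?mulr1 => [|k /andP [/eqP ok kr]].
    by rewrite /collapse_var own_rep eqxx mnmE (@sum_fiber w).
  by rewrite w0 ?expr0.
move/negbT; rewrite negb_forall => /existsP [k]; rewrite negb_imply => /andP [kr wk].
rewrite (bigD1 (own k)) //= (bigD1 k) ?eqxx //= /collapse_var (negbTE kr) expr0n (negbTE wk).
by rewrite !mul0r.
Qed.

Lemma lift_idx_proof (k : 'I_(size s)) : (index (lift_mon (nth 0%MM s k)) salpha < size salpha)%N.
Proof. by rewrite index_mem; apply/salpha_def; rewrite pi_mon_lift mem_nth. Qed.

Lemma proj_idx_proof (w : 'I_(size salpha)) :
  (index (pi_mon own (nth 0%MM salpha w)) s < size s)%N.
Proof. by rewrite index_mem; apply/salpha_def; apply: mem_nth. Qed.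

Definition lift_idx k := Ordinal (lift_idx_proof k).
Definition proj_idx w := Ordinal (proj_idx_proof w).
Definition on_reps_idx : pred 'I_(size salpha) := fun w => on_reps (nth 0%MM salpha w).

Lemma nth_lift_idx k : nth 0%MM salpha (lift_idx k) = lift_mon (nth 0%MM s k).
Proof. by rewrite nth_index //; apply/salpha_def; rewrite pi_mon_lift mem_nth. Qed.

Lemma lift_idxK : cancel lift_idx proj_idx.
Proof. by move=> k; apply: val_inj; rewrite /= nth_lift_idx pi_mon_lift index_uniq. Qed.

Lemma proj_idxK w : on_reps_idx w -> lift_idx (proj_idx w) = w.
Proof.
move=> w_reps; apply: val_inj => /=.
by rewrite nth_index ?lift_pi_mon ?index_uniq //; apply/salpha_def; apply: mem_nth.
Qed.

Lemma on_reps_lift_idx k : on_reps_idx (lift_idx k).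
Proof. by rewrite /on_reps_idx nth_lift_idx on_reps_lift. Qed.

Local Notation push := (mmap (@mpolyC _ K) (fun k => 'X_(lift_idx k))).
Local Notation pull := (mmap (@mpolyC _ K) (@pull_var K _ _ proj_idx on_reps_idx)).
Local Notation spread := (mmap (@mpolyC N' K) (fun x : 'I_n => 'X_(rep x))).
Local Notation collapse := (mmap (@mpolyC n K) collapse_var).

Lemma toric_map_push p : toric_map (s := salpha) (push p) = spread (toric_map (s := s) p).
Proof.
apply: (@mpoly_rmorph_eq _ _ _ (@toric_map K N' salpha \o push)%FUN
  (spread \o @toric_map K n s)%FUN).
  by move=> c; rewrite /toric_map /= !mmapC.
by move=> k; rewrite /toric_map /= !(mmapX, mmap1U) nth_lift_idx mpolyX_lift_mon.
Qed.

Lemma toric_map_pull p : toric_map (s := s) (pull p) = collapse (toric_map (s := salpha) p).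
Proof.
apply: (@mpoly_rmorph_eq _ _ _ (@toric_map K n s \o pull)%FUN
  (collapse \o @toric_map K N' salpha)%FUN).
  by move=> c; rewrite /toric_map /= !mmapC.
move=> w; rewrite /toric_map /= !(mmapX, mmap1U) mmap1_collapse /pull_var /on_reps_idx.
case: ifP => _; last by rewrite mmap0.
by rewrite !(mmapX, mmap1U) /= nth_index //; apply/salpha_def; apply: mem_nth.
Qed.

Theorem betti_le_polarization i j :
  (betti (@toric_ideal K n s) i j <= betti (@toric_ideal K N' salpha) i j)%N.
Proof.
apply: (betti_le_variable_retract lift_idxK proj_idxK on_reps_lift_idx i j
  (toric_ideal_is_ideal K s) (toric_ideal_is_ideal K salpha)) => p; rewrite /toric_ideal.
- by rewrite toric_map_push => ->; rewrite mmap0.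
- by rewrite toric_map_pull => ->; rewrite mmap0.
Qed.

End Polarization.

Unset Implicit Arguments.
Theorem proposition2p18
  (K : fieldType) (n : nat) (alpha : 'I_n -> nat)
  (alpha_pos : forall i, (0 < alpha i)%N)
  (s : seq 'X_{1..n}) (s_uniq : uniq s)
  (s_min : div_minimal s)
  (s_homog : homogeneous_toric K s)
  (N' : nat) (own : 'I_N' -> 'I_n)
  (own_card : forall i, #|[set k | own k == i]| = alpha i)
  (salpha : seq 'X_{1..N'}) (salpha_uniq : uniq salpha)
  (salpha_def : forall w : 'X_{1..N'}, w \in salpha <-> pi_mon own w \in s) :
  forall i j : nat,
    (betti (@toric_ideal K n s) i j <= betti (@toric_ideal K N' salpha) i j)%N.
Proof.
have own_onto x : exists k, own k == x.
  have : (0 < #|[set k | own k == x]|)%N by rewrite own_card.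
  by case/card_gt0P => k; rewrite inE; exists k.
exact: betti_le_polarization s_uniq salpha_uniq own_onto salpha_def.
Qed.
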